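(* Suppose $F$ is symmetric ($F(-i)=1-F(i)$ for all $i$). Fix $R\in(0,1)$, let $\beta=F(1/2-R)$, fix $\sigma>0$, and regard the value $V$ of the recommendation system as a function of $Q\in(0,1/2)$, where $q_H=\frac{(1-2Q)\sigma}{1+\sigma}$, $q_L=\frac{1-2Q}{1+\sigma}$ and $q_1+q_2=2Q$ (with $q_1,q_2>0$). Then: (i) if $3\sigma-\beta-\sigma^2+\sigma^2\beta>0$, the value is decreasing in $Q$; in particular this is the case when $\sigma=1$; (ii) if $3\sigma-\beta-\sigma^2+\sigma^2\beta<0$, then $Q^*=\frac{3\sigma-\beta-\sigma^2+\sigma^2\beta}{4\sigma-4\beta-4\sigma^2+4\sigma^2\beta}$ lies in $(0,1/2)$ and maximizes the value over $Q\in(0,1/2)$.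
   Context: Setting. Consumer types are $i\in[-1/2,1/2]$, distributed according to a continuous cumulative distribution function $F$ with full support on $[-1/2,1/2]$. A product has a quality vector $(Q_1,Q_2)\in\{0,1\}^2$; a type-$i$ consumer gets payoff $(1/2+i)Q_1+(1/2-i)Q_2$ from it. The versions $(1,1),(1,0),(0,1),(0,0)$ have prior probabilities $q_H,q_1,q_2,q_L$, all strictly positive and summing to $1$. Given a threshold $R\in(0,1)$, a sender with type drawn from $F$ independently of the product gives a buy recommendation $B$ if her payoff is at least $R$ and a don't-buy recommendation $D$ otherwise. Let $\phi_1(R)=1-F(R-1/2)$, $\phi_2(R)=F(1/2-R)$, $\pi^B=q_H+q_1\phi_1(R)+q_2\phi_2(R)$, $\pi^D=1-\pi^B$. Posteriors: $p^B_H=q_H/\pi^B$, $p^B_1=q_1\phi_1(R)/\pi^B$, $p^B_2=q_2\phi_2(R)/\pi^B$; $p^D_H=0$, $p^D_1=q_1(1-\phi_1(R))/\pi^D$, $p^D_2=q_2(1-\phi_2(R))/\pi^D$. Let $U_i^r=p_H^r+(1/2+i)p_1^r+(1/2-i)p_2^r$ for $r\in\{B,D\}$ and $U_i^0=q_H+(1/2+i)q_1+(1/2-i)q_2$. The value of the recommendation system is $V=\pi^B\int_{-1/2}^{1/2}\max\{U_i^B-U_i^0,0\}\,dF(i)+\pi^D\int_{-1/2}^{1/2}\max\{U_i^D-U_i^0,0\}\,dF(i)$. Under symmetry this depends on the primitives only through $Q=(q_1+q_2)/2$, $\sigma=q_H/q_L$ and $\beta$. *)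

(* R : realType, consumer-type distribution given by a
   probability measure P on R (Borel sets) whose CDF is F. *)
From HB Require Import structures.
From mathcomp Require Import all_boot all_order all_algebra.
From mathcomp Require Import all_classical all_reals all_analysis.
Set Implicit Arguments. Unset Strict Implicit. Unset Printing Implicit Defensive.
Import Order.TTheory GRing.Theory Num.Theory.
Import numFieldNormedType.Exports.
Local Open Scope classical_set_scope.
Local Open Scope ring_scope.

Section RecSys.
Variable R : realType.

Definition type_cdf (P : probability R R) (x : R) : R := fine (P `]-oo, x]%classic).

Variable F : R -> R.

Definition phi1 (Rt : R) : R := 1 - F (Rt - 2^-1).
Definition phi2 (Rt : R) : R := F (2^-1 - Rt).

Variables (qH q1 q2 Rt : R).

Definition piB : R := qH + q1 * phi1 Rt + q2 * phi2 Rt.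
Definition piD : R := 1 - piB.

Definition pBH : R := qH / piB.
Definition pB1 : R := q1 * phi1 Rt / piB.
Definition pB2 : R := q2 * phi2 Rt / piB.
Definition pDH : R := 0.
Definition pD1 : R := q1 * (1 - phi1 Rt) / piD.
Definition pD2 : R := q2 * (1 - phi2 Rt) / piD.

Definition UB (i : R) : R := pBH + (2^-1 + i) * pB1 + (2^-1 - i) * pB2.
Definition UD (i : R) : R := pDH + (2^-1 + i) * pD1 + (2^-1 - i) * pD2.
Definition U0 (i : R) : R := qH + (2^-1 + i) * q1 + (2^-1 - i) * q2.

(* value of the recommendation system; the integral dF(i) over [-1/2,1/2]
   is the (real-valued) Lebesgue integral w.r.t. the law P whose CDF is F *)
Definition value (P : probability R R) : R :=
  piB * (\int[P]_(i in `[- 2^-1, 2^-1]%classic) Num.max (UB i - U0 i) 0)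
  + piD * (\int[P]_(i in `[- 2^-1, 2^-1]%classic) Num.max (UD i - U0 i) 0).

End RecSys.

From HB Require Import structures.
From mathcomp Require Import all_boot all_order all_algebra.
From mathcomp Require Import all_classical all_reals all_analysis.
From mathcomp Require Import ring lra measurable_realfun.
Set Implicit Arguments.
Unset Strict Implicit.
Unset Printing Implicit Defensive.
Import Order.TTheory GRing.Theory Num.Theory.
Import numFieldNormedType.Exports.
Local Open Scope classical_set_scope.
Local Open Scope ring_scope.

(* Symmetry of F gives phi1 = phi2 = beta, and it makes the law P invariant
   under i |-> -i (both agree on the half-open intervals generating the Borel
   sets), so P has mean 0 on [-1/2, 1/2].  After a buy recommendation every
   type gains and after a don't-buy recommendation none does; the gain is
   affine in i, so integrating it against P evaluates it at i = 0.  Hence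
   V = qH (1 - pi^B) + Q (beta - pi^B), and substituting
   qH = (1 - 2Q) sigma / (1 + sigma) gives
   (1 + sigma)^2 V = sigma - c Q + 2 d Q^2  with  2 d < c,
   where 4 d is the denominator of Q*.  Such a quadratic is decreasing on
   (0, 1/2) when c > 0, and when c < 0 its vertex c / (4 d) lies in (0, 1/2). *)

Lemma set_itv_setDNy (R : realType) (x y : itv_bound R) :
  [set` Interval x y] = [set` Interval -oo%O y] `\` [set` Interval -oo%O x].
Proof. by rewrite setDE setCitvl -set_itvI /Order.meet /= join0x meetx1. Qed.

Section symmetric_law.
Variables (R : realType) (P : probability R R) (F : R -> R).
Hypothesis F_cdf : forall x, F x = type_cdf P x.
Hypothesis F_continuous : continuous F.

Lemma probability_itvNy (b : bool) (x : R) :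
  P [set` Interval -oo%O (BSide b x)] = (F x)%:E.
Proof.
have PNyc (y : R) : P `]-oo, y]%classic = (F y)%:E.
  by rewrite F_cdf fineK ?fin_num_measure.
case: b; last exact: PNyc.
have PNyoE : P `]-oo, x[%classic = (fine (P `]-oo, x[%classic))%:E.
  by rewrite fineK ?fin_num_measure.
rewrite PNyoE; congr EFin; apply/eqP; rewrite eq_le; apply/andP; split.
  rewrite -lee_fin -PNyoE -PNyc; apply: le_measure; rewrite ?inE //.
  by apply: subset_itvl; rewrite bnd_simp.
apply: (cvgr_to_le (cvg_at_left_filter (@F_continuous x))).
near=> y; rewrite -lee_fin -PNyoE -PNyc; apply: le_measure; rewrite ?inE //.
apply: subset_itvl; rewrite bnd_simp; near: y; exact: nbhs_left_lt.
Unshelve. all: end_near.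
Qed.

Lemma cdf_in01 (x : R) : 0 <= F x <= 1.
Proof.
have PF := probability_itvNy false x.
by rewrite -!lee_fin -PF measure_ge0 probability_le1.
Qed.

Lemma probability_itv (b1 b2 : bool) (a c : R) : a < c ->
  P [set` Interval (BSide b1 a) (BSide b2 c)] = (F c - F a)%:E.
Proof.
move=> ac; rewrite set_itv_setDNy measureD //; last first.
  by rewrite -ge0_fin_numE ?fin_num_measure.
rewrite setIidr; first by rewrite EFinB; congr (_ - _)%E; apply: probability_itvNy.
by apply: subset_itvl; case: b1; case: b2; rewrite bnd_simp ?ltW.
Qed.

Hypothesis F_symmetric : forall x, F (- x) = 1 - F x.

Lemma pushforward_oppr_probability A : measurable A -> pushforward P -%R A = P A.
Proof.
have on_ocitv X : R.-ocitv.-measurable X -> pushforward P -%R X = P X.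
  case/ocitvP => [->|[[a b] /= ab ->]]; first by rewrite !measure0.
  rewrite /pushforward opp_preimage_itvbndbnd /= !probability_itv ?ltrN2 //.
  by rewrite !F_symmetric; congr EFin; ring.
apply: (measure_unique R.-ocitv.-measurable (fun n => `]- n%:R, n%:R]%classic)) => //.
- exact: ocitvI.
- by move=> n; exists (- n%:R, n%:R).
- apply/seteqP; split => // x _; exists (Num.truncn `|x|).+1 => //=.
  have := truncnS_gt `|x|; rewrite ltr_norml => /andP[xl xr].
  by rewrite in_itv /= xl ltW.
- move=> n /=; rewrite on_ocitv; last by exists (- n%:R, n%:R).
  by rewrite -ge0_fin_numE ?fin_num_measure.
Qed.

Lemma integrable_id_itv (a : R) : P.-integrable `[- a, a] (EFin \o id).
Proof.
apply: measurable_bounded_integrable => //.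
  by rewrite -ge0_fin_numE ?fin_num_measure.
rewrite /bounded_near; near=> M => x; rewrite /= in_itv /= => /andP[ax xa].
have aM : a <= M by near: M; apply: nbhs_pinfty_ge; exact: num_real.
by rewrite ler_norml; apply/andP; split; lra.
Unshelve. all: end_near.
Qed.

Lemma Rintegral_id_itv_sym (a : R) : \int[P]_(x in `[- a, a]) x = 0.
Proof.
set D := `[- a, a]%classic.
have mD : measurable D by exact: measurable_itv.
have oppD : -%R @^-1` D = D by rewrite /D opp_preimage_itvbndbnd /= opprK.
have int_oppr : \int[P]_(x in D) x = \int[P]_(x in D) (- 1 * x).
  rewrite /Rintegral; congr fine.
  transitivity (\int[pushforward P -%R]_(x in D) x%:E)%E.
    by apply: eq_measure_integral => A mA _ /=; rewrite pushforward_oppr_probability.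
  rewrite integral_pushforward ?oppD //=.
  - by apply: eq_integral => x _; rewrite mulN1r.
  - by apply: eq_integrable (integrableN (integrable_id_itv a)) => //.
move: int_oppr; rewrite RintegralZl //; [lra | exact: integrable_id_itv].
Qed.

Lemma Rintegral_affine_itv_sym (u v a : R) : 0 < a ->
  \int[P]_(x in `[- a, a]) (u + v * x) = u * (2 * F a - 1).
Proof.
move=> a0; rewrite RintegralD //; last 2 first.
- exact: finite_measure_integrable_cst.
- apply: eq_integrable (integrableZl (measurable_itv _) v (integrable_id_itv a)) => //.
rewrite RintegralZl //; last exact: integrable_id_itv.
rewrite Rintegral_id_itv_sym mulr0 addr0 Rintegral_cst //; congr (_ * _).
have -> : 2 * F a - 1 = F a - F (- a) by rewrite F_symmetric; ring.
by apply: EFin_inj; rewrite fineK ?fin_num_measure //; apply: probability_itv; lra.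
Qed.

End symmetric_law.

Section quadratic.
Variable R : realFieldType.
Implicit Types a b x y : R.

Lemma quadratic_decreasing a b x y : 0 < b -> a < b -> 0 <= x -> x < y -> x + y <= 1 ->
  a * y ^+ 2 - b * y < a * x ^+ 2 - b * x.
Proof.
move=> b_gt0 ab x_ge0 xy xy_le1; rewrite -subr_lt0.
rewrite (_ : _ - _ = (y - x) * (a * (x + y) - b)); last by ring.
rewrite pmulr_rlt0 ?subr_gt0 // subr_lt0.
by have [a_le0|a_gt0] := leP a 0; nra.
Qed.

Lemma quadratic_le_vertex a b x : a < 0 ->
  a * x ^+ 2 - b * x <= a * (b / (2 * a)) ^+ 2 - b * (b / (2 * a)).
Proof.
move=> a_lt0; rewrite -subr_ge0.
rewrite (_ : _ - _ = - a * (x - b / (2 * a)) ^+ 2); last by field; lra.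
by rewrite mulr_ge0 ?sqr_ge0 // oppr_ge0 ltW.
Qed.

Lemma vertex_gt0_lt_half a b : b < 0 -> a < b -> 0 < b / (2 * a) < 2^-1.
Proof.
move=> b_lt0 ab; have a2_lt0 : 2 * a < 0 by lra.
apply/andP; split; rewrite -(ltr_nM2r a2_lt0) mulfVK ?lt_eqF //; lra.
Qed.
End quadratic.

(* [S] stands for q1 + q2 and [b] for beta, so that pi^B = qH + S b. *)
Definition symmetric_value {R : fieldType} (qH S b : R) : R :=
  qH * (1 - qH - S * b) + S / 2 * (b - qH - S * b).

Section symmetric_value_algebra.
Variable R : realFieldType.

Lemma symmetric_value_quadratic (s b Q : R) : 0 < s ->
  symmetric_value ((1 - 2 * Q) * s / (1 + s)) (2 * Q) b =
  (2 * (s - b - s ^+ 2 + s ^+ 2 * b) * Q ^+ 2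
   - (3 * s - b - s ^+ 2 + s ^+ 2 * b) * Q + s) / (1 + s) ^+ 2.
Proof. by move=> s_gt0; rewrite /symmetric_value; field; lra. Qed.

Lemma symmetric_value_coef_lt (s b : R) : 0 < s -> 0 <= b <= 1 ->
  2 * (s - b - s ^+ 2 + s ^+ 2 * b) < 3 * s - b - s ^+ 2 + s ^+ 2 * b.
Proof. move=> s_gt0 /andP[b_ge0 b_le1]; nra. Qed.

(* Numerators of U^B_i - U^0_i and U^D_i - U^0_i when phi1 = phi2 = b,
   with a = (1/2 + i) q1 + (1/2 - i) q2. *)
Lemma buy_gain_num_ge0 (qH S b a : R) :
  0 <= qH -> 0 < S -> qH + S <= 1 -> 0 <= b <= 1 -> 0 <= a <= S ->
  0 <= qH * (1 - qH - S * b) + a * (b - qH - S * b).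
Proof.
move=> qH_ge0 S_gt0 qL_ge0 /andP[b_ge0 b_le1] /andP[a_ge0 a_leS].
have Sb_ge0 : 0 <= S * b by rewrite mulr_ge0 // ltW.
have Sb_le_S : S * b <= S by rewrite ler_piMr // ltW.
rewrite -(pmulr_rge0 _ S_gt0).
have -> : S * (qH * (1 - qH - S * b) + a * (b - qH - S * b)) =
    (S - a) * qH * (1 - qH - S * b) + a * (qH + S * b) * (1 - qH - S) by ring.
by rewrite addr_ge0 // !mulr_ge0 //; lra.
Qed.

Lemma dont_buy_gain_num_le0 (qH S b a : R) :
  0 <= qH -> 0 < S -> qH + S <= 1 -> 0 <= b <= 1 -> 0 <= a <= S ->
  (1 - b) * a - (1 - qH - S * b) * (qH + a) <= 0.
Proof.
move=> qH_ge0 S_gt0 qL_ge0 /andP[b_ge0 b_le1] /andP[a_ge0 a_leS].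
have Sb_ge0 : 0 <= S * b by rewrite mulr_ge0 // ltW.
have Sb_le_S : S * b <= S by rewrite ler_piMr // ltW.
rewrite -(pmulr_rle0 _ S_gt0).
have -> : S * ((1 - b) * a - (1 - qH - S * b) * (qH + a)) =
    - ((S - a) * qH * (1 - qH - S * b) + a * (qH + S * b) * (1 - qH - S)) by ring.
by rewrite oppr_le0 addr_ge0 // !mulr_ge0 //; lra.
Qed.
End symmetric_value_algebra.

Section value_symmetric.
Variables (R : realType) (P : probability R R) (F : R -> R).
Hypothesis F_cdf : forall x, F x = type_cdf P x.
Hypothesis F_continuous : continuous F.
Hypothesis F_symmetric : forall x, F (- x) = 1 - F x.
Hypothesis F_half : F 2^-1 = 1.
Variables (Rt qH q1 q2 : R).
Hypotheses (qH_gt0 : 0 < qH) (q1_gt0 : 0 < q1) (q2_gt0 : 0 < q2).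
Hypothesis qL_gt0 : qH + q1 + q2 < 1.

Local Notation b := (F (2^-1 - Rt)).
Local Notation S := (q1 + q2).
Local Notation pB := (qH + S * b).
Local Notation w i := ((2^-1 + i) * q1 + (2^-1 - i) * q2).

Let b01 : 0 <= b <= 1. Proof. exact: cdf_in01. Qed.
Let S_gt0 : 0 < S. Proof. exact: addr_gt0. Qed.
Let qHS_le1 : qH + S <= 1. Proof. by move: qL_gt0; lra. Qed.

Let pB_gt0 : 0 < pB.
Proof.
case/andP: b01 => b_ge0 _; have : 0 <= S * b by rewrite mulr_ge0 // ltW.
by move: qH_gt0; lra.
Qed.

Let pD_gt0 : 0 < 1 - pB.
Proof.
case/andP: b01 => _ b_le1; have : S * b <= S by rewrite ler_piMr // ltW.
by move: qL_gt0; lra.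
Qed.

Let w_ge0_leS i : - 2^-1 <= i <= 2^-1 -> 0 <= w i <= S.
Proof. by case/andP=> i_ge i_le; apply/andP; split; move: q1_gt0 q2_gt0; nra. Qed.

Lemma piB_symmetric : piB F qH q1 q2 Rt = pB.
Proof. by rewrite /piB /phi1 /phi2 -[Rt - _]opprB F_symmetric; ring. Qed.

Lemma UB_sub_U0 i : UB F qH q1 q2 Rt i - U0 qH q1 q2 i =
  (qH * (1 - qH - S * b) + w i * (b - qH - S * b)) / pB.
Proof.
rewrite /UB /U0 /pBH /pB1 /pB2 piB_symmetric /phi1 /phi2 -[Rt - _]opprB F_symmetric.
by field; rewrite lt0r_neq0.
Qed.

Lemma UD_sub_U0 i : UD F qH q1 q2 Rt i - U0 qH q1 q2 i =
  ((1 - b) * w i - (1 - qH - S * b) * (qH + w i)) / (1 - pB).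
Proof.
rewrite /UD /U0 /pDH /pD1 /pD2 /piD piB_symmetric /phi1 /phi2.
rewrite -[Rt - _]opprB F_symmetric.
by field; rewrite lt0r_neq0.
Qed.

Lemma Rintegral_buy_gain :
  \int[P]_(i in `[- 2^-1, 2^-1]) Num.max (UB F qH q1 q2 Rt i - U0 qH q1 q2 i) 0 =
  symmetric_value qH S b / pB.
Proof.
transitivity (\int[P]_(i in `[- 2^-1, 2^-1])
    (symmetric_value qH S b / pB + (q1 - q2) * (b - qH - S * b) / pB * i)).
  apply: eq_Rintegral => i; rewrite inE /= in_itv /= => i_in.
  rewrite max_l UB_sub_U0 /symmetric_value; first by field; rewrite lt0r_neq0.
  rewrite divr_ge0 ?(ltW pB_gt0) //.
  exact: buy_gain_num_ge0 (ltW qH_gt0) S_gt0 qHS_le1 b01 (w_ge0_leS i_in).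
by rewrite (Rintegral_affine_itv_sym F_cdf F_continuous F_symmetric) // F_half; lra.
Qed.

Lemma Rintegral_dont_buy_gain :
  \int[P]_(i in `[- 2^-1, 2^-1]) Num.max (UD F qH q1 q2 Rt i - U0 qH q1 q2 i) 0 = 0.
Proof.
transitivity (\int[P]_(i in `[- 2^-1, 2^-1]) (0 : R)); last first.
  by rewrite Rintegral_cst // mul0r.
apply: eq_Rintegral => i; rewrite inE /= in_itv /= => i_in.
rewrite max_r // UD_sub_U0 pmulr_lle0 ?invr_gt0 //.
exact: dont_buy_gain_num_le0 (ltW qH_gt0) S_gt0 qHS_le1 b01 (w_ge0_leS i_in).
Qed.

Lemma value_symmetric : value F qH q1 q2 Rt P = symmetric_value qH S b.
Proof.
rewrite /value Rintegral_buy_gain Rintegral_dont_buy_gain /piD piB_symmetric.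
by rewrite mulr0 addr0 mulrC divfK // lt0r_neq0.
Qed.

End value_symmetric.

Lemma value_quadratic (R : realType) (P : probability R R) (F : R -> R)
    (Rt s Q q1 q2 : R) :
  (forall x, F x = type_cdf P x) -> continuous F ->
  (forall x, F (- x) = 1 - F x) -> F 2^-1 = 1 ->
  0 < s -> 0 < Q < 2^-1 -> 0 < q1 -> 0 < q2 -> q1 + q2 = 2 * Q ->
  let b := F (2^-1 - Rt) in
  value F ((1 - 2 * Q) * s / (1 + s)) q1 q2 Rt P =
  (2 * (s - b - s ^+ 2 + s ^+ 2 * b) * Q ^+ 2
   - (3 * s - b - s ^+ 2 + s ^+ 2 * b) * Q + s) / (1 + s) ^+ 2.
Proof.
move=> F_cdf F_continuous F_symmetric F_half s_gt0 /andP[Q_gt0 Q_lt].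
move=> q1_gt0 q2_gt0 S_eq b.
have qH_gt0 : 0 < (1 - 2 * Q) * s / (1 + s) by rewrite divr_gt0 ?mulr_gt0 //; lra.
have qL_gt0 : (1 - 2 * Q) * s / (1 + s) + q1 + q2 < 1.
  have -> : (1 - 2 * Q) * s / (1 + s) = 1 - 2 * Q - (1 - 2 * Q) / (1 + s).
    by field; lra.
  have : 0 < (1 - 2 * Q) / (1 + s) by rewrite divr_gt0 //; lra.
  lra.
by rewrite value_symmetric // S_eq symmetric_value_quadratic.
Qed.

Theorem corollary3 (R : realType) (P : probability R R) (F : R -> R)
    (Rt sigma : R) :
  (* F is the CDF of the consumer-type distribution P *)
  (forall x, F x = type_cdf P x) ->
  (* continuous, with full support on [-1/2,1/2] *)
  continuous F ->
  F (- 2^-1) = 0 -> F (2^-1) = 1 ->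
  (forall x y, - 2^-1 <= x -> x < y -> y <= 2^-1 -> F x < F y) ->
  (* symmetry *)
  (forall i, F (- i) = 1 - F i) ->
  0 < Rt < 1 -> 0 < sigma ->
  let beta := F (2^-1 - Rt) in
  (* q_L = (1-2Q)/(1+sigma) = 1 - q_H - q_1 - q_2 is implicit: V only uses pi^D = 1 - pi^B *)
  let qH Q := (1 - 2 * Q) * sigma / (1 + sigma) in
  let V Q q1 q2 := value F (qH Q) q1 q2 Rt P in
  let c := 3 * sigma - beta - sigma ^+ 2 + sigma ^+ 2 * beta in
  (* (i) *)
  (0 < c ->
     forall Q q1 q2 Q' q1' q2',
       0 < Q -> Q < Q' -> Q' < 2^-1 ->
       0 < q1 -> 0 < q2 -> q1 + q2 = 2 * Q ->
       0 < q1' -> 0 < q2' -> q1' + q2' = 2 * Q' ->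
       V Q' q1' q2' < V Q q1 q2)
  /\ (sigma = 1 -> 0 < c)
  (* (ii) *)
  /\ (c < 0 ->
      let Qs := c / (4 * sigma - 4 * beta - 4 * sigma ^+ 2
                     + 4 * sigma ^+ 2 * beta) in
      0 < Qs < 2^-1 /\
      forall q1s q2s, 0 < q1s -> 0 < q2s -> q1s + q2s = 2 * Qs ->
      forall Q q1 q2, 0 < Q < 2^-1 ->
        0 < q1 -> 0 < q2 -> q1 + q2 = 2 * Q ->
        V Q q1 q2 <= V Qs q1s q2s).
Proof.
(* Strict monotonicity, F (-1/2) = 0 and 0 < Rt < 1 are not needed: every CDF
   value lies in [0, 1], and F (-1/2) = 0 follows from symmetry. *)
move=> F_cdf F_continuous _ F_half _ F_symmetric _ s_gt0 beta qH V c.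
set a := 2 * (sigma - beta - sigma ^+ 2 + sigma ^+ 2 * beta).
have a_lt_c : a < c by apply: symmetric_value_coef_lt => //; exact: cdf_in01.
have VE Q q1 q2 : 0 < Q < 2^-1 -> 0 < q1 -> 0 < q2 -> q1 + q2 = 2 * Q ->
    V Q q1 q2 = (a * Q ^+ 2 - c * Q + sigma) / (1 + sigma) ^+ 2.
  by move=> Q_in q1_gt0 q2_gt0 S_eq; exact: value_quadratic.
split; [|split].
- move=> c_gt0 Q q1 q2 Q' q1' q2' Q_gt0 QQ' Q'_lt.
  move=> q1_gt0 q2_gt0 S_eq q1'_gt0 q2'_gt0 S'_eq.
  rewrite !VE //; [|apply/andP; split; lra..].
  rewrite ltr_pM2r ?ltrD2r; last by rewrite invr_gt0 exprn_gt0 //; lra.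
  by apply: quadratic_decreasing => //; lra.
- by move=> s1; rewrite /c s1 expr1n mul1r; lra.
move=> c_lt0 Qs.
have QsE : Qs = c / (2 * a) by rewrite /Qs /a; congr (_ / _); ring.
have Qs_in : 0 < Qs < 2^-1 by rewrite QsE; apply: vertex_gt0_lt_half.
split=> // q1s q2s q1s_gt0 q2s_gt0 Ss_eq Q q1 q2 Q_in q1_gt0 q2_gt0 S_eq.
rewrite !VE // ler_pM2r ?lerD2r; last by rewrite invr_gt0 exprn_gt0 //; lra.
by rewrite QsE; apply: quadratic_le_vertex; lra.
Qed.
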